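(* Let $a,c,d$ be generic parameters. Define $\alpha_0^*=\beta_0^*=\alpha_0^\dagger=\beta_0^\dagger=1$ and, for $n\ge1$, \begin{align*} \alpha_n^*&=\frac{(aq,c,d;q)_n}{(aq^2/c,aq^2/d,q;q)_n}\Big(\frac{-aq}{cd}\Big)^n q^{(n^2+n)/2}- aq^{2n-1}\frac{(aq,c,d;q)_{n-1}}{(aq^2/c,aq^2/d,q;q)_{n-1}}\Big(\frac{-aq}{cd}\Big)^{n-1} q^{(n^2-n)/2},\\ \beta_n^*&=\frac{(aq^2/cd;q)_n}{(aq^2/c,aq^2/d,q;q)_n},\\ \alpha_n^{\dagger}&=q^n\frac{(aq,c,d;q)_n}{(aq^2/c,aq^2/d,q;q)_n}\Big(\frac{-aq}{cd}\Big)^n q^{(n^2+n)/2}- q^{n-1}\frac{(aq,c,d;q)_{n-1}}{(aq^2/c,aq^2/d,q;q)_{n-1}}\Big(\frac{-aq}{cd}\Big)^{n-1} q^{(n^2-n)/2},\\ \beta_n^{\dagger}&=q^n\frac{(aq^2/cd;q)_n}{(aq^2/c,aq^2/d,q;q)_n}. \end{align*} Then $(\alpha_n^*,\beta_n^* )$ and $(\alpha_n^\dagger,\beta_n^\dagger)$ are Bailey pairs relative to $a$.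
   Context: Notation: $(x;q)_n=\prod_{i=0}^{n-1}(1-xq^i)$, $(x_1,\dots,x_j;q)_n=(x_1;q)_n\cdots(x_j;q)_n$. A pair of sequences $(\alpha_n,\beta_n)_{n\ge0}$ is a Bailey pair relative to $a$ if $\alpha_0=1$ and for all $n\ge0$, $\beta_n=\sum_{r=0}^n\frac{\alpha_r}{(q;q)_{n-r}(aq;q)_{n+r}}$. *)

From HB Require Import structures.
From mathcomp Require Import all_boot all_order all_algebra.
Set Implicit Arguments. Unset Strict Implicit. Unset Printing Implicit Defensive.
Import Order.TTheory GRing.Theory Num.Theory.
Local Open Scope ring_scope.

Definition qpoch {F : fieldType} (x q : F) (n : nat) : F :=
  \prod_(i < n) (1 - x * q ^+ i).

Definition bailey_pair {F : fieldType} (q a : F) (alpha beta : nat -> F) : Prop :=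
  alpha 0%N = 1 /\
  forall n : nat, beta n =
    \sum_(r < n.+1) alpha r / (qpoch q q (n - r) * qpoch (a * q) q (n + r)).

Definition ratio {F : fieldType} (q a c d : F) (k : nat) : F :=
  (qpoch (a * q) q k * qpoch c q k * qpoch d q k) /
  (qpoch (a * q ^+ 2 / c) q k * qpoch (a * q ^+ 2 / d) q k * qpoch q q k).

Definition alpha_star {F : fieldType} (q a c d : F) (n : nat) : F :=
  match n with
  | 0%N => 1
  | _ =>
    ratio q a c d n * (- (a * q) / (c * d)) ^+ n * q ^+ ((n * n + n) %/ 2)
    - a * q ^+ (2 * n - 1) * ratio q a c d (n - 1)
        * (- (a * q) / (c * d)) ^+ (n - 1) * q ^+ ((n * n - n) %/ 2)
  end.

Definition beta_star {F : fieldType} (q a c d : F) (n : nat) : F :=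
  match n with
  | 0%N => 1
  | _ => qpoch (a * q ^+ 2 / (c * d)) q n /
         (qpoch (a * q ^+ 2 / c) q n * qpoch (a * q ^+ 2 / d) q n * qpoch q q n)
  end.

Definition alpha_dag {F : fieldType} (q a c d : F) (n : nat) : F :=
  match n with
  | 0%N => 1
  | _ =>
    q ^+ n * ratio q a c d n * (- (a * q) / (c * d)) ^+ n * q ^+ ((n * n + n) %/ 2)
    - q ^+ (n - 1) * ratio q a c d (n - 1)
        * (- (a * q) / (c * d)) ^+ (n - 1) * q ^+ ((n * n - n) %/ 2)
  end.

Definition beta_dag {F : fieldType} (q a c d : F) (n : nat) : F :=
  match n with
  | 0%N => 1
  | _ => q ^+ n * qpoch (a * q ^+ 2 / (c * d)) q n /
         (qpoch (a * q ^+ 2 / c) q n * qpoch (a * q ^+ 2 / d) q n * qpoch q q n)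
  end.

From Pilot Require Import Defs.
From HB Require Import structures.
From mathcomp Require Import all_boot all_order all_algebra.
From mathcomp Require Import zify ring.
Import GRing.Theory.
Local Open Scope ring_scope.

(* Both pairs are built from the term
     A_r = (aq,c,d;q)_r / (aq^2/c,aq^2/d,q;q)_r * (-aq/(cd))^r * q^(r(r+1)/2),
   since for r > 0
     alpha_star_r = A_r - a q^(2r-1) A_(r-1),   alpha_dag_r = q^r A_r - q^(r-1) A_(r-1).
   Abel summation moves these differences onto the Bailey weights
   1/((q;q)_(n-r) (aq;q)_(n+r)); in both cases the Bailey sum becomes (q^0 resp.
   q^n times) the terminating very-well-poised sum
     S_n = sum_(r <= n) A_r (1 - aq^(2r+1)) / ((q;q)_(n-r) (aq;q)_(n+r+1)),
   and beta_star_n, beta_dag_n are the same multiples of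
     B_n = (aq^2/(cd);q)_n / (aq^2/c,aq^2/d,q;q)_n.
   The summation S_n = B_n is proved by creative telescoping: with
   lambda_n = B_(n+1)/B_n, the summands satisfy a first-order recurrence in n
   up to the difference in r of an explicit certificate, each instance being a
   rational identity checked by [field]. *)

Lemma qpoch0 {F : fieldType} (x q : F) : qpoch x q 0 = 1.
Proof. by rewrite /qpoch big_ord0. Qed.

Lemma qpochS {F : fieldType} (x q : F) (k : nat) :
  qpoch x q k.+1 = qpoch x q k * (1 - x * q ^+ k).
Proof. by rewrite /qpoch big_ord_recr. Qed.

Lemma qpoch_neq0 {F : fieldType} (x q : F) (k : nat) :
  (forall i : nat, 1 - x * q ^+ i != 0) -> qpoch x q k != 0.
Proof. by move=> hx; apply/prodf_neq0 => i _; apply: hx. Qed.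

Lemma abel_summation {R : pzRingType} (al X Y den : nat -> R) (n : nat) :
  al 0%N = X 0%N -> (forall s, al s.+1 = X s.+1 - Y s) ->
  \sum_(r < n.+1) al r * den r =
  \sum_(r < n) (X r * den r - Y r * den r.+1) + X n * den n.
Proof.
move=> al0 alS; rewrite big_ord_recl al0 /=.
under eq_bigr => r _ do rewrite alS mulrBl.
rewrite sumrB addrA -(big_ord_recl n (fun r => X r * den r)) big_ord_recr /=.
by rewrite sumrB addrAC.
Qed.

Lemma creative_telescoping {R : pzRingType} (T H : nat -> nat -> R) (B lam : nat -> R) :
  T 0%N 0%N = B 0%N ->
  (forall n, B n.+1 = lam n * B n) ->
  (forall n, H n 0%N = 0) ->
  (forall n r, (r <= n)%N -> T n.+1 r - lam n * T n r = H n r.+1 - H n r) ->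
  (forall n, T n.+1 n.+1 = - H n n.+1) ->
  forall n, \sum_(r < n.+1) T n r = B n.
Proof.
move=> T00 Bsucc H0 step last; elim=> [|n IHn]; first by rewrite big_ord1.
have shifted : \sum_(r < n.+1) (T n.+1 r - lam n * T n r) = H n n.+1.
  rewrite -(big_mkord xpredT (fun r => T n.+1 r - lam n * T n r)).
  rewrite (@telescope_sumr_eq _ _ _ (H n)) ?H0 ?subr0 // => r /andP[_].
  by rewrite ltnS => /step.
rewrite big_ord_recr /= last Bsucc -IHn mulr_sumr -shifted -sumrB.
by apply: eq_bigr => r _; rewrite opprB addrCA subrr addr0.
Qed.

(* Clearing the denominator e of a factor 1 - a q^2/e * q^k keeps it nonzero;
   this is the shape in which [field] asks for such factors. *)
Lemma scaled_factor_neq0 {F : fieldType} (a q e : F) (k : nat) :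
  e != 0 -> 1 - a * q ^+ 2 / e * q ^+ k != 0 -> e - a * (q * q) * q ^+ k != 0.
Proof.
move=> he hk; have -> : e - a * (q * q) * q ^+ k = e * (1 - a * q ^+ 2 / e * q ^+ k).
  by field.
exact: mulf_neq0.
Qed.

Lemma triangular_succ (s : nat) :
  ((s.+1 * s.+1 + s.+1) %/ 2 = (s * s + s) %/ 2 + s.+1)%N.
Proof.
have -> : (s.+1 * s.+1 + s.+1 = s.+1 * 2 + (s * s + s))%N by nia.
by rewrite divnMDl // addnC.
Qed.

Section BaileyPairs.
Variables (F : fieldType) (q a c d : F).

Definition zarg : F := - (a * q) / (c * d).

Definition core_term (r : nat) : F :=
  Defs.ratio q a c d r * zarg ^+ r * q ^+ ((r * r + r) %/ 2).

Definition core_ratio (s : nat) : F :=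
  (1 - a * q ^+ s.+1) * (1 - c * q ^+ s) * (1 - d * q ^+ s) * zarg * q ^+ s.+1 /
  ((1 - a * q ^+ 2 / c * q ^+ s) * (1 - a * q ^+ 2 / d * q ^+ s) * (1 - q ^+ s.+1)).

Lemma core_term0 : core_term 0%N = 1.
Proof. by rewrite /core_term /Defs.ratio !qpoch0 !mulr1 invr1 mulr1. Qed.

Lemma core_term_succ (s : nat) : core_term s.+1 = core_term s * core_ratio s.
Proof.
rewrite /core_term /core_ratio /Defs.ratio triangular_succ !qpochS exprD !exprS.
by rewrite !invfM; ring.
Qed.

Definition beta_core (n : nat) : F :=
  qpoch (a * q ^+ 2 / (c * d)) q n /
  (qpoch (a * q ^+ 2 / c) q n * qpoch (a * q ^+ 2 / d) q n * qpoch q q n).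

Definition beta_ratio (n : nat) : F :=
  (1 - a * q ^+ 2 / (c * d) * q ^+ n) /
  ((1 - a * q ^+ 2 / c * q ^+ n) * (1 - a * q ^+ 2 / d * q ^+ n) * (1 - q ^+ n.+1)).

Lemma beta_core0 : beta_core 0%N = 1.
Proof. by rewrite /beta_core !qpoch0 !mulr1 invr1 mulr1. Qed.

Lemma beta_core_succ (n : nat) : beta_core n.+1 = beta_ratio n * beta_core n.
Proof. by rewrite /beta_core /beta_ratio !qpochS !exprS !invfM; ring. Qed.

Lemma alpha_star_split (s : nat) :
  alpha_star q a c d s.+1 = core_term s.+1 - a * q ^+ (s + s).+1 * core_term s.
Proof.
rewrite /alpha_star /core_term -/zarg.
have -> : (2 * s.+1 - 1 = (s + s).+1)%N by lia.
have -> : (s.+1 * s.+1 - s.+1 = s * s + s)%N by nia.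
by rewrite subSS subn0 !mulrA.
Qed.

Lemma alpha_dag_split (s : nat) :
  alpha_dag q a c d s.+1 = q ^+ s.+1 * core_term s.+1 - q ^+ s * core_term s.
Proof.
rewrite /alpha_dag /core_term -/zarg.
have -> : (s.+1 * s.+1 - s.+1 = s * s + s)%N by nia.
by rewrite subSS subn0 !mulrA.
Qed.

Lemma beta_star_core (n : nat) : beta_star q a c d n = beta_core n.
Proof. by case: n => [|n]; rewrite ?beta_core0. Qed.

Lemma beta_dag_core (n : nat) : beta_dag q a c d n = q ^+ n * beta_core n.
Proof.
by case: n => [|n]; rewrite ?beta_core0 ?expr0 ?mulr1 // /beta_dag /beta_core mulrA.
Qed.

Definition bailey_weight (n r : nat) : F :=
  (qpoch q q (n - r) * qpoch (a * q) q (n + r))^-1.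

Definition abel_weight (n r : nat) : F :=
  (1 - a * q ^+ (r + r).+1) / (qpoch q q (n - r) * qpoch (a * q) q (n + r).+1).

Definition summand (n r : nat) : F := core_term r * abel_weight n r.

Definition certificate_factor (n : nat) : F :=
  a * q ^+ n.+2 / (c * d * (1 - a * q ^+ 2 / c * q ^+ n) *
    (1 - a * q ^+ 2 / d * q ^+ n) * (1 - q ^+ n.+1)).

Definition certificate (n r : nat) : F :=
  if r is s.+1 then
    certificate_factor n * core_term s *
      (1 - a * q ^+ s.+1) * (1 - c * q ^+ s) * (1 - d * q ^+ s) /
    (qpoch q q (n - s) * qpoch (a * q) q (n + s).+2)
  else 0.

Hypotheses (hc : c != 0) (hd : d != 0)
  (hqq : forall i : nat, 1 - q ^+ i.+1 != 0)
  (haq : forall i : nat, 1 - a * q ^+ i.+1 != 0)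
  (hac : forall i : nat, 1 - a * q ^+ 2 / c * q ^+ i != 0)
  (had : forall i : nat, 1 - a * q ^+ 2 / d * q ^+ i != 0).

Lemma aq_factor_neq0 (k : nat) : 1 - a * q * q ^+ k != 0.
Proof. by rewrite -mulrA -exprS. Qed.

Lemma qpoch_q_neq0 (k : nat) : qpoch q q k != 0.
Proof. by apply: qpoch_neq0 => i; rewrite -exprS. Qed.

Lemma qpoch_aq_neq0 (k : nat) : qpoch (a * q) q k != 0.
Proof. exact: qpoch_neq0 aq_factor_neq0. Qed.

Lemma c_factor_neq0 (k : nat) : c - a * (q * q) * q ^+ k != 0.
Proof. exact: scaled_factor_neq0. Qed.

Lemma d_factor_neq0 (k : nat) : d - a * (q * q) * q ^+ k != 0.
Proof. exact: scaled_factor_neq0. Qed.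

(* Discharges the side conditions of [field]: after folding the powers of q
   back, each denominator is an instance of one of the facts above. *)
Ltac nonzero_factors :=
  rewrite -?exprD -?exprS ?hc ?hd ?hqq ?aq_factor_neq0 ?qpoch_q_neq0 ?qpoch_aq_neq0
    ?c_factor_neq0 ?d_factor_neq0 //.

Lemma bailey_weight_star_diff (n r : nat) : (r < n)%N ->
  bailey_weight n r - a * q ^+ (r + r).+1 * bailey_weight n r.+1 = abel_weight n r.
Proof.
move=> /subnKC <-; set m := (n - r.+1)%N.
rewrite /bailey_weight /abel_weight.
have -> : (r.+1 + m - r = m.+1)%N by lia.
have -> : (r.+1 + m - r.+1 = m)%N by lia.
have -> : (r.+1 + m + r = (r + m + r).+1)%N by lia.
have -> : (r.+1 + m + r.+1 = (r + m + r).+2)%N by lia.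
rewrite !qpochS !(exprS, exprD).
by field; nonzero_factors.
Qed.

Lemma bailey_weight_dag_diff (n r : nat) : (r < n)%N ->
  q ^+ r * (bailey_weight n r - bailey_weight n r.+1) = q ^+ n * abel_weight n r.
Proof.
move=> /subnKC <-; set m := (n - r.+1)%N.
rewrite /bailey_weight /abel_weight.
have -> : (r.+1 + m - r = m.+1)%N by lia.
have -> : (r.+1 + m - r.+1 = m)%N by lia.
have -> : (r.+1 + m + r = (r + m + r).+1)%N by lia.
have -> : (r.+1 + m + r.+1 = (r + m + r).+2)%N by lia.
rewrite !qpochS !(exprS, exprD).
by field; nonzero_factors.
Qed.

Lemma bailey_weight_diag (n : nat) : bailey_weight n n = abel_weight n n.
Proof.
rewrite /bailey_weight /abel_weight subnn qpoch0 qpochS !(exprS, exprD).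
by field; nonzero_factors.
Qed.

Lemma telescoping_step_first (n : nat) :
  summand n.+1 0%N - beta_ratio n * summand n 0%N = certificate n 1%N - certificate n 0%N.
Proof.
rewrite /summand /certificate /abel_weight /beta_ratio /certificate_factor core_term0.
rewrite !addn0 !subn0 !qpochS !(exprS, exprD).
by field; nonzero_factors.
Qed.

Lemma telescoping_step_inner (n s : nat) : (s < n)%N ->
  summand n.+1 s.+1 - beta_ratio n * summand n s.+1 =
  certificate n s.+2 - certificate n s.+1.
Proof.
move=> /subnKC <-; set m := (n - s.+1)%N; rewrite addSn.
rewrite /summand /certificate /abel_weight /beta_ratio /certificate_factor.
rewrite core_term_succ /core_ratio /zarg.
have -> : ((s + m).+2 - s.+1 = m.+1)%N by lia.
have -> : ((s + m).+1 - s.+1 = m)%N by lia.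
have -> : ((s + m).+1 - s = m.+1)%N by lia.
have -> : ((s + m).+2 + s.+1 = (s + m + s).+3)%N by lia.
have -> : ((s + m).+1 + s.+1 = (s + m + s).+2)%N by lia.
have -> : ((s + m).+1 + s = (s + m + s).+1)%N by lia.
have -> : (s.+1 + s.+1 = (s + s).+2)%N by lia.
rewrite !qpochS !(exprS, exprD).
by field; nonzero_factors.
Qed.

Lemma telescoping_boundary (n : nat) : summand n.+1 n.+1 = - certificate n n.+1.
Proof.
rewrite /summand /certificate /abel_weight /certificate_factor.
rewrite core_term_succ /core_ratio /zarg !subnn qpoch0.
have -> : (n.+1 + n.+1 = (n + n).+2)%N by lia.
rewrite !qpochS !(exprS, exprD).
by field; nonzero_factors.
Qed.

Lemma well_poised_sum (n : nat) : \sum_(r < n.+1) summand n r = beta_core n.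
Proof.
apply: (@creative_telescoping _ summand certificate) => {n} [|n|n|n [|s] rn|n].
- rewrite /summand /abel_weight core_term0 beta_core0 subnn addn0 qpochS !qpoch0.
  by rewrite !(exprS, exprD); field; rewrite -(expr1 q) haq.
- exact: beta_core_succ.
- by [].
- exact: telescoping_step_first.
- exact: telescoping_step_inner.
- exact: telescoping_boundary.
Qed.

Lemma bailey_sum_star (n : nat) :
  \sum_(r < n.+1) alpha_star q a c d r / (qpoch q q (n - r) * qpoch (a * q) q (n + r)) =
  \sum_(r < n.+1) summand n r.
Proof.
transitivity (\sum_(r < n.+1) alpha_star q a c d r * bailey_weight n r); first by [].
rewrite (abel_summation _ core_term (fun s => a * q ^+ (s + s).+1 * core_term s)).
- rewrite big_ord_recr /= /summand bailey_weight_diag; congr (_ + _).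
  by apply: eq_bigr => r _; rewrite -bailey_weight_star_diff //; ring.
- by rewrite core_term0.
- exact: alpha_star_split.
Qed.

Lemma bailey_sum_dag (n : nat) :
  \sum_(r < n.+1) alpha_dag q a c d r / (qpoch q q (n - r) * qpoch (a * q) q (n + r)) =
  q ^+ n * \sum_(r < n.+1) summand n r.
Proof.
transitivity (\sum_(r < n.+1) alpha_dag q a c d r * bailey_weight n r); first by [].
rewrite (abel_summation _ (fun r => q ^+ r * core_term r) (fun s => q ^+ s * core_term s)).
- rewrite mulr_sumr big_ord_recr /= /summand bailey_weight_diag.
  congr (_ + _); last by rewrite mulrA.
  by apply: eq_bigr => r _; rewrite [RHS]mulrCA -bailey_weight_dag_diff //; ring.
- by rewrite core_term0 expr0 mulr1.
- exact: alpha_dag_split.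
Qed.

End BaileyPairs.

Theorem mainTheorem5 (F : fieldType) (q a c d : F)
  (hq : q != 0) (hc : c != 0) (hd : d != 0)
  (hqq : forall i : nat, 1 - q ^+ i.+1 != 0)
  (haq : forall i : nat, 1 - a * q ^+ i.+1 != 0)
  (hac : forall i : nat, 1 - a * q ^+ 2 / c * q ^+ i != 0)
  (had : forall i : nat, 1 - a * q ^+ 2 / d * q ^+ i != 0) :
  bailey_pair q a (alpha_star q a c d) (beta_star q a c d) /\
  bailey_pair q a (alpha_dag q a c d) (beta_dag q a c d).
Proof.
split; split => // n.
- by rewrite beta_star_core bailey_sum_star // well_poised_sum.
- by rewrite beta_dag_core bailey_sum_dag // well_poised_sum.
Qed.
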